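(* Let $\{a_n\}_{n\ge0}$ be a P-recursive sequence whose asymptotic expression is \[ a_n = e^{Q(\rho,n)}\, n^{r}\left(\sum_{s=0}^{M} b_s n^{-s/\rho} + o\!\left(n^{-M/\rho}\right)\right),\qquad Q(\rho,n)=\mu_0 n\log n+\sum_{j=1}^{\rho}\mu_j n^{j/\rho}, \] where $\rho, M$ are positive integers, $\mu_j, r, b_s$ are real numbers, and $b_0\neq 0$. Then there exist real numbers $c_1,\dots,c_M$ such that \[ \lim_{n\to\infty} n^{M/\rho}\left(\frac{a_na_{n+2}}{a_{n+1}^2}-1-\sum_{i=1}^{M}\frac{c_i}{n^{i/\rho}}\right)=0 . \]
   Context: A sequence $\{a_n\}$ is P-recursive (of order $d$) if it satisfies a recurrence $a_n=r_1(n)a_{n-1}+\cdots+r_d(n)a_{n-d}$ with rational functions $r_i(n)$. *)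

From Stdlib Require Import Reals List.
From Coquelicot Require Import Coquelicot.
Open Scope R_scope.

(* Evaluation of a real polynomial given by its coefficient list
   [c0; c1; ...; ck] (constant term first) at x. *)
Definition poly_eval (l : list R) (x : R) : R :=
  fold_right (fun c acc => c + x * acc) 0 l.

Definition P_recursive_of_order (a : nat -> R) (d : nat) : Prop :=
  exists p q : nat -> list R,
    forall n : nat, (d <= n)%nat ->
      (forall i : nat, (1 <= i <= d)%nat -> poly_eval (q i) (INR n) <> 0) /\
      a n = sum_n_m (fun i => poly_eval (p i) (INR n) / poly_eval (q i) (INR n)
                              * a (n - i)%nat) 1 d.

Definition P_recursive (a : nat -> R) : Prop :=
  exists d : nat, P_recursive_of_order a d.

Definition Qexp (rho : nat) (mu : nat -> R) (n : nat) : R :=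
  mu 0%nat * INR n * ln (INR n)
  + sum_n_m (fun j => mu j * Rpower (INR n) (INR j / INR rho)) 1 rho.

From Stdlib Require Import Reals List Lra Lia FunctionalExtensionality.
From Coquelicot Require Import Coquelicot.
Open Scope R_scope.

(** Put [tau n = n^(-1/rho)] and call a sequence expandable when it is a polynomial of
    degree at most [M] in [tau n] up to [o(tau n ^ M)]. Expandable sequences form a ring, and
    they are closed under composition with functions that have Taylor approximations at 0
    (applied to sequences tending to 0) and under inversion (when the limit is nonzero). The
    Taylor approximations of [exp], [(1+y)^a] and [(1+y) ln (1+y)] on [[-1/2, 1/2]] come from
    integrating bounds on derivatives with the mean value theorem.

    Writing [a (n+k) = exp (Q (n+k)) n^r A_k n], the ratio [a_n a_(n+2) / a_(n+1)^2] is
    [exp (Q n + Q (n+2) - 2 Q (n+1)) A_0 A_2 / A_1^2]. Each [A_k] is expandable with limit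
    [b 0], and the second difference of [Q] is a combination of the expandable sequences
    [n^(j/rho) (F (2/n) - 2 F (1/n) + F 0)], [j <= rho], which are [O(1/n)] since [F] is
    [C^2]. So the ratio is expandable, and its constant coefficient is its limit, 1. *)

(** * Truncated power series and Taylor approximations at 0 *)

Fixpoint poly_sum (c : nat -> R) (K : nat) (y : R) : R :=
  match K with O => 0 | S K' => poly_sum c K' y + c K' * y ^ K' end.

Definition prim_coef (a : R) (c : nat -> R) (k : nat) : R :=
  match k with O => a | S k' => c k' / INR (S k') end.

Lemma poly_sum_at_0 c K : poly_sum c (S K) 0 = c O.
Proof. induction K as [|K IH]; simpl in *; [ring | rewrite IH; ring]. Qed.

Lemma poly_sum_scal a c K y : poly_sum (fun k => a * c k) K y = a * poly_sum c K y.
Proof. induction K; simpl; [ring | rewrite IHK; ring]. Qed.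

Lemma poly_sum_add c d K y :
  poly_sum (fun k => c k + d k) K y = poly_sum c K y + poly_sum d K y.
Proof. induction K; simpl; [ring | rewrite IHK; ring]. Qed.

Lemma poly_sum_split c K y :
  poly_sum c (S K) y = c O + y * poly_sum (fun k => c (S k)) K y.
Proof. induction K; simpl in *; [ring | rewrite IHK; ring]. Qed.

Lemma pow_le_pow_of_le_1 y a b : 0 <= y <= 1 -> (a <= b)%nat -> y ^ b <= y ^ a.
Proof.
  intros Hy Hab. replace b with (a + (b - a))%nat by lia. rewrite pow_add.
  rewrite <- (Rmult_1_r (y ^ a)) at 2.
  apply Rmult_le_compat_l; [apply pow_le; lra|].
  induction (b - a)%nat as [|k IH]; simpl; [lra|].
  rewrite <- (Rmult_1_r 1). apply Rmult_le_compat; try lra. apply pow_le; lra.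
Qed.

Lemma poly_sum_abs_le c K y : 0 <= y <= 1 ->
  Rabs (poly_sum c K y) <= poly_sum (fun k => Rabs (c k)) K 1.
Proof.
  intros Hy. induction K; simpl.
  - rewrite Rabs_R0; lra.
  - eapply Rle_trans; [apply Rabs_triang|]. apply Rplus_le_compat; auto.
    rewrite Rabs_mult, pow1, Rmult_1_r, (Rabs_right (y ^ K)) by (apply Rle_ge, pow_le; lra).
    rewrite <- (Rmult_1_r (Rabs (c K))) at 2.
    apply Rmult_le_compat_l; [apply Rabs_pos | apply (pow_le_pow_of_le_1 y 0); [lra | lia]].
Qed.

Lemma is_derive_poly_sum_prim a c K y :
  is_derive (poly_sum (prim_coef a c) (S K)) y (poly_sum c K y).
Proof.
  induction K as [|K IH].
  - simpl. auto_derive; auto.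
  - apply (is_derive_plus (poly_sum (prim_coef a c) (S K))
             (fun z => prim_coef a c (S K) * z ^ S K)); [exact IH|].
    assert (HK : INR (S K) <> 0) by (apply not_0_INR; lia).
    unfold prim_coef. set (m := INR (S K)) in *.
    auto_derive; auto.
    change (match K with 0%nat => 1 | S _ => INR K + 1 end) with (INR (S K)).
    fold m. field. exact HK.
Qed.

Lemma poly_sum_zero K y : poly_sum (fun _ => 0) K y = 0.
Proof. induction K; simpl; [|rewrite IHK]; ring. Qed.

Lemma poly_sum_sub_coef0_le c K y : 0 <= y <= 1 ->
  Rabs (poly_sum c (S K) y - c O) <= y * poly_sum (fun k => Rabs (c (S k))) K 1.
Proof.
  intros Hy. rewrite poly_sum_split.
  replace (c O + _ - c O) with (y * poly_sum (fun k => c (S k)) K y) by ring.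
  rewrite Rabs_mult, (Rabs_right y) by lra.
  apply Rmult_le_compat_l; [lra | apply (poly_sum_abs_le (fun k => c (S k))), Hy].
Qed.

Lemma poly_sum_sum_n_m c K y : poly_sum c (S K) y = c O + sum_n_m (fun i => c i * y ^ i) 1 K.
Proof.
  induction K as [|K IH].
  - rewrite sum_n_m_zero by lia. simpl. change (zero : R) with 0. ring.
  - change (poly_sum c (S (S K)) y) with (poly_sum c (S K) y + c (S K) * y ^ S K).
    rewrite IH, sum_n_Sm by lia. change (plus ?a ?b) with (a + b). ring.
Qed.

Lemma Rabs_le_pow_of_derive (f g : R -> R) (C : R) (K : nat) :
  f 0 = 0 ->
  (forall y, Rabs y <= /2 -> is_derive f y (g y)) ->
  (forall y, Rabs y <= /2 -> Rabs (g y) <= C * Rabs y ^ K) ->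
  forall y, Rabs y <= /2 -> Rabs (f y) <= C * Rabs y ^ S K.
Proof.
  intros f0 Hf Hg y Hy.
  destruct (Req_dec y 0) as [->|Hy0].
  { rewrite f0, Rabs_R0. simpl. rewrite Rmult_0_l, Rmult_0_r. lra. }
  assert (HC : 0 <= C).
  { pose proof (Rabs_pos (g y)). pose proof (pow_lt _ K (Rabs_pos_lt _ Hy0)).
    pose proof (Hg y Hy). nra. }
  assert (Hseg : forall z, Rmin 0 y <= z <= Rmax 0 y -> Rabs z <= Rabs y).
  { unfold Rmin, Rmax. intros z Hz.
    destruct (Rle_dec 0 y); apply Rabs_le; rewrite ?Rabs_right, ?Rabs_left1 in * by lra;
      split; lra. }
  destruct (MVT_gen f 0 y g) as [z [Hz Hfz]].
  - intros z Hz. apply Hf. pose proof (Hseg z); lra.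
  - intros z Hz. apply derivable_continuous_pt. exists (g z).
    apply is_derive_Reals, Hf. pose proof (Hseg z Hz); lra.
  - rewrite f0, !Rminus_0_r in Hfz. rewrite Hfz, Rabs_mult. simpl pow.
    rewrite (Rmult_comm (Rabs y)), <- Rmult_assoc.
    apply Rmult_le_compat_r; [apply Rabs_pos|].
    eapply Rle_trans; [apply Hg; pose proof (Hseg z Hz); lra|].
    apply Rmult_le_compat_l; [exact HC|]. apply pow_incr. split; [apply Rabs_pos | auto].
Qed.

(* The radius 1/2 keeps [1 + y] away from 0, where [ln] is singular. *)
Definition taylor_approx (F : R -> R) (K : nat) : Prop :=
  exists c C, forall y, Rabs y <= /2 -> Rabs (F y - poly_sum c K y) <= C * Rabs y ^ K.

Lemma taylor_approx_integrate f g K :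
  (forall y, Rabs y <= /2 -> is_derive f y (g y)) ->
  taylor_approx g K -> taylor_approx f (S K).
Proof.
  intros Hf [c [C Hg]]. exists (prim_coef (f 0) c), C.
  apply (Rabs_le_pow_of_derive _ (fun y => g y - poly_sum c K y)); [|intros y Hy|exact Hg].
  - rewrite poly_sum_at_0. simpl. ring.
  - apply (is_derive_minus f); [exact (Hf y Hy) | apply is_derive_poly_sum_prim].
Qed.

Lemma taylor_approx_scal a F K : taylor_approx F K -> taylor_approx (fun y => a * F y) K.
Proof.
  intros [c [C HF]]. exists (fun k => a * c k), (Rabs a * C). intros y Hy.
  rewrite poly_sum_scal, <- Rmult_minus_distr_l, Rabs_mult, Rmult_assoc.
  apply Rmult_le_compat_l; [apply Rabs_pos | auto].
Qed.

Lemma taylor_approx_0 F B : (forall y, Rabs y <= /2 -> Rabs (F y) <= B) -> taylor_approx F 0.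
Proof.
  intros HF. exists (fun _ => 0), B. intros y Hy. simpl. rewrite Rminus_0_r, Rmult_1_r. auto.
Qed.

Lemma taylor_approx_coef0 F c C K : (0 < K)%nat ->
  (forall y, Rabs y <= /2 -> Rabs (F y - poly_sum c K y) <= C * Rabs y ^ K) -> c O = F 0.
Proof.
  intros HK HF. destruct K as [|K]; [lia|].
  specialize (HF 0). rewrite poly_sum_at_0, Rabs_R0, pow_i, Rmult_0_r in HF by lia.
  assert (H : Rabs (F 0 - c O) <= 0) by (apply HF; lra).
  pose proof (Rabs_pos (F 0 - c O)).
  symmetry. apply Rminus_diag_uniq, Rabs_eq_0. lra.
Qed.

Lemma exp_le_compat x y : x <= y -> exp x <= exp y.
Proof. intros [Hlt | ->]; [left; apply exp_increasing |]; lra. Qed.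

Lemma taylor_approx_exp K : taylor_approx exp K.
Proof.
  induction K as [|K IH].
  - apply (taylor_approx_0 _ (exp (/2))). intros y Hy%Rabs_le_between.
    rewrite Rabs_right by (left; apply exp_pos). apply exp_le_compat. lra.
  - apply (taylor_approx_integrate _ exp); [|exact IH].
    intros y _. auto_derive; auto. ring.
Qed.

Definition pow1p (a y : R) : R := exp (a * ln (1 + y)).

Lemma pow1p_0 a : pow1p a 0 = 1.
Proof. unfold pow1p. rewrite Rplus_0_r, ln_1, Rmult_0_r, exp_0. reflexivity. Qed.

Lemma pow1p_0_l y : pow1p 0 y = 1.
Proof. unfold pow1p. rewrite Rmult_0_l, exp_0. reflexivity. Qed.

Lemma pow1p_m1 y : -1 < y -> pow1p (-1) y = / (1 + y).
Proof.
  intros Hy. unfold pow1p. replace (-1 * ln (1 + y)) with (- ln (1 + y)) by ring.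
  rewrite exp_Ropp, exp_ln by lra. reflexivity.
Qed.

Lemma is_derive_pow1p a y : -1 < y -> is_derive (pow1p a) y (a * pow1p (a - 1) y).
Proof.
  intros Hy. unfold pow1p. auto_derive; [lra|].
  replace ((a - 1) * ln (1 + y)) with (a * ln (1 + y) + - ln (1 + y)) by ring.
  rewrite exp_plus, exp_Ropp, exp_ln by lra. field. lra.
Qed.

Lemma taylor_approx_pow1p K : forall a, taylor_approx (pow1p a) K.
Proof.
  induction K as [|K IH]; intros a.
  - apply (taylor_approx_0 _ (exp (Rabs a * ln 2))). intros y Hy%Rabs_le_between.
    unfold pow1p. rewrite Rabs_right by (left; apply exp_pos).
    assert (Hln : Rabs (ln (1 + y)) <= ln 2).
    { pose proof (ln_le (/2) (1 + y) ltac:(lra) ltac:(lra)).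
      pose proof (ln_le (1 + y) 2 ltac:(lra) ltac:(lra)).
      rewrite ln_Rinv in * by lra. apply Rabs_le; lra. }
    apply exp_le_compat. eapply Rle_trans; [apply Rle_abs|]. rewrite Rabs_mult.
    apply Rmult_le_compat_l; [apply Rabs_pos | exact Hln].
  - apply (taylor_approx_integrate _ (fun y => a * pow1p (a - 1) y)).
    + intros y Hy%Rabs_le_between. apply is_derive_pow1p. lra.
    + apply taylor_approx_scal, IH.
Qed.

Definition xlog1p (y : R) : R := (1 + y) * ln (1 + y).

Lemma xlog1p_0 : xlog1p 0 = 0.
Proof. unfold xlog1p. rewrite Rplus_0_r, ln_1. ring. Qed.

Lemma taylor_approx_xlog1p K : taylor_approx xlog1p (S (S K)).
Proof.
  apply (taylor_approx_integrate _ (fun y => ln (1 + y) + 1)).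
  { intros y Hy%Rabs_le_between. unfold xlog1p. auto_derive; [lra|]. field. lra. }
  apply (taylor_approx_integrate _ (pow1p (-1))); [|apply taylor_approx_pow1p].
  intros y Hy%Rabs_le_between. rewrite pow1p_m1 by lra. auto_derive; [lra|]. field. lra.
Qed.

Lemma second_diff_bound F : taylor_approx F 2 ->
  exists C, forall y, Rabs y <= /4 -> Rabs (F (2 * y) - 2 * F y + F 0) <= C * y ^ 2.
Proof.
  intros [c [C HF]]. pose proof (taylor_approx_coef0 F c C 2 ltac:(lia) HF) as Hc0.
  exists (6 * C). intros y Hy.
  assert (H1 : Rabs (F y - poly_sum c 2 y) <= C * y ^ 2).
  { rewrite <- pow2_abs. apply HF. lra. }
  assert (H2 : Rabs (F (2 * y) - poly_sum c 2 (2 * y)) <= 4 * C * y ^ 2).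
  { replace (4 * C * y ^ 2) with (C * (2 * y) ^ 2) by ring. rewrite <- pow2_abs.
    apply HF. rewrite Rabs_mult, Rabs_right by lra. lra. }
  replace (F (2 * y) - 2 * F y + F 0)
    with ((F (2 * y) - poly_sum c 2 (2 * y)) - 2 * (F y - poly_sum c 2 y))
    by (simpl; rewrite Hc0; ring).
  eapply Rle_trans; [apply Rabs_triang|].
  rewrite Rabs_Ropp, Rabs_mult, (Rabs_right 2) by lra. lra.
Qed.

Lemma is_lim_seq_0_le (v w : nat -> R) :
  eventually (fun n => Rabs (v n) <= w n) -> is_lim_seq w 0 -> is_lim_seq v 0.
Proof.
  intros Hvw Hw. apply is_lim_seq_abs_0.
  apply (is_lim_seq_le_le_loc (fun _ => 0) _ w); [|apply is_lim_seq_const | exact Hw].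
  apply (filter_imp _ _ (fun n H => conj (Rabs_pos (v n)) H) Hvw).
Qed.

Lemma is_lim_seq_scal_0 a v : is_lim_seq v 0 -> is_lim_seq (fun n => a * v n) 0.
Proof.
  intros Hv. replace (Finite 0) with (Rbar_mult a 0) by (simpl; f_equal; ring).
  apply is_lim_seq_scal_l, Hv.
Qed.

Lemma is_lim_seq_of_sub_0 v L : is_lim_seq (fun n => v n - L) 0 -> is_lim_seq v L.
Proof.
  intros H. apply (is_lim_seq_ext (fun n => (v n - L) + L)); [intros; ring|].
  replace (Finite L) with (Finite (0 + L)) by (f_equal; ring).
  apply is_lim_seq_plus'; [exact H | apply is_lim_seq_const].
Qed.

Lemma eventually_abs_le_of_lim_0 w eps : is_lim_seq w 0 -> 0 < eps ->
  eventually (fun n => Rabs (w n) <= eps).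
Proof.
  intros Hw Heps. apply is_lim_seq_spec in Hw.
  refine (filter_imp _ _ _ (Hw (mkposreal eps Heps))). intros n Hn.
  simpl in Hn. rewrite Rminus_0_r in Hn. lra.
Qed.

Lemma is_lim_seq_taylor_comp F w : taylor_approx F 1 -> is_lim_seq w 0 ->
  is_lim_seq (fun n => F (w n)) (F 0).
Proof.
  intros [c [C HF]] Hw. pose proof (taylor_approx_coef0 F c C 1 ltac:(lia) HF) as Hc0.
  apply is_lim_seq_of_sub_0, (is_lim_seq_0_le _ (fun n => C * Rabs (w n))).
  - pose proof (eventually_abs_le_of_lim_0 w (/2) Hw ltac:(lra)) as Hw2.
    refine (filter_imp _ _ _ Hw2). intros n Hn. specialize (HF (w n) Hn).
    simpl in HF. rewrite Hc0, !Rmult_1_r, Rplus_0_l in HF. exact HF.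
  - apply is_lim_seq_scal_0, (proj1 (is_lim_seq_abs_0 w)), Hw.
Qed.

Lemma sum_n_m_closed (P : (nat -> R) -> Prop) :
  P (fun _ => 0) -> (forall f g, P f -> P g -> P (fun n => f n + g n)) ->
  forall (F : nat -> nat -> R) a b, (forall i, (a <= i <= b)%nat -> P (F i)) ->
  P (fun n => sum_n_m (fun i => F i n) a b).
Proof.
  intros P0 Padd F a b HF.
  destruct (Nat.le_gt_cases a b) as [Hab | Hba].
  - assert (Hk : forall k, (a + k <= b)%nat ->
                 P (fun n => sum_n_m (fun i => F i n) a (a + k))).
    { induction k as [|k IH]; intros Hk.
      - replace (fun n => sum_n_m (fun i => F i n) a (a + 0)) with (F a)
          by (apply functional_extensionality; intros n;
              rewrite Nat.add_0_r, sum_n_n; reflexivity).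
        apply HF; lia.
      - replace (fun n => sum_n_m (fun i => F i n) a (a + S k))
          with (fun n => sum_n_m (fun i => F i n) a (a + k) + F (a + S k)%nat n)
          by (apply functional_extensionality; intros n;
              rewrite <- plus_n_Sm, sum_n_Sm by lia; reflexivity).
        apply Padd; [apply IH; lia | apply HF; lia]. }
    replace b with (a + (b - a))%nat by lia. apply Hk; lia.
  - replace (fun n => sum_n_m (fun i => F i n) a b) with (fun _ : nat => 0)
      by (apply functional_extensionality; intros n; rewrite sum_n_m_zero by lia; reflexivity).
    exact P0.
Qed.

Lemma eventually_ge (N : nat) : eventually (fun n => (N <= n)%nat).
Proof. exists N. auto. Qed.

Lemma eventually_neq_0_of_lim v (L : R) : is_lim_seq v L -> L <> 0 ->
  eventually (fun n => v n <> 0).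
Proof.
  intros Hv HL. apply is_lim_seq_spec in Hv.
  refine (filter_imp _ _ _ (Hv (mkposreal _ (Rabs_pos_lt L HL)))). simpl. intros n Hn E.
  rewrite E, Rminus_0_l, Rabs_Ropp in Hn. lra.
Qed.

(** * Asymptotic expansions in powers of [n^(-1/rho)] *)

Definition inv_nat (n : nat) : R := / INR n.

Lemma is_lim_seq_inv_nat : is_lim_seq inv_nat 0.
Proof.
  apply (is_lim_seq_ext (fun n => / INR n)); [reflexivity|].
  apply (is_lim_seq_inv _ p_infty); [apply is_lim_seq_INR | discriminate].
Qed.

Lemma is_lim_seq_inv_nat_scal k : is_lim_seq (fun n => k * inv_nat n) 0.
Proof. apply is_lim_seq_scal_0, is_lim_seq_inv_nat. Qed.

Lemma INR_pos n : (1 <= n)%nat -> 0 < INR n.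
Proof. intros; apply lt_0_INR; lia. Qed.

Section Scale.

Variable rho : nat.
Hypothesis Hrho : (0 < rho)%nat.

Definition nroot (n : nat) : R := Rpower (INR n) (/ INR rho).
Definition tau (n : nat) : R := / nroot n.

Lemma nroot_pos n : 0 < nroot n.
Proof. apply exp_pos. Qed.

Lemma tau_pos n : 0 < tau n.
Proof. apply Rinv_0_lt_compat, nroot_pos. Qed.

Lemma nroot_mul_tau n : nroot n * tau n = 1.
Proof. apply Rinv_r. pose proof (nroot_pos n); lra. Qed.

Lemma Rpower_INR_frac n i : (1 <= n)%nat ->
  Rpower (INR n) (INR i / INR rho) = nroot n ^ i.
Proof.
  intros Hn. unfold nroot. rewrite <- Rpower_pow by apply exp_pos.
  rewrite Rpower_mult. f_equal. unfold Rdiv. ring.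
Qed.

Lemma nroot_pow_rho n : (1 <= n)%nat -> nroot n ^ rho = INR n.
Proof.
  intros Hn. rewrite <- Rpower_INR_frac by exact Hn.
  rewrite Rdiv_diag by (apply not_0_INR; lia). apply Rpower_1, INR_pos, Hn.
Qed.

Lemma tau_pow_rho n : (1 <= n)%nat -> tau n ^ rho = inv_nat n.
Proof. intros Hn. unfold tau, inv_nat. rewrite pow_inv, nroot_pow_rho; auto. Qed.

Lemma nroot_le_mono n m : (1 <= n)%nat -> (n <= m)%nat -> nroot n <= nroot m.
Proof.
  intros Hn Hm. apply Rle_Rpower_l.
  - left; apply Rinv_0_lt_compat, INR_pos; lia.
  - split; [apply INR_pos, Hn | apply le_INR, Hm].
Qed.

Lemma nroot_ge_1 n : (1 <= n)%nat -> 1 <= nroot n.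
Proof.
  intros Hn. replace 1 with (nroot 1)
    by (unfold nroot, Rpower; simpl; rewrite ln_1, Rmult_0_r, exp_0; reflexivity).
  apply nroot_le_mono; lia.
Qed.

Lemma tau_le_1 n : (1 <= n)%nat -> tau n <= 1.
Proof.
  intros Hn. unfold tau. rewrite <- Rinv_1. apply Rinv_le_contravar; [lra | apply nroot_ge_1, Hn].
Qed.

Lemma is_lim_seq_tau : is_lim_seq tau 0.
Proof.
  apply is_lim_seq_spec. intros eps. pose proof (cond_pos eps) as Heps.
  pose proof (eventually_abs_le_of_lim_0 _ (eps ^ rho / 2) is_lim_seq_inv_nat
                ltac:(apply Rdiv_lt_0_compat; [apply pow_lt|]; lra)) as Hx.
  refine (filter_imp _ _ _ (filter_and _ _ Hx (eventually_ge 1))). intros n [Hxn Hn].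
  rewrite Rminus_0_r, Rabs_right by (left; apply tau_pos).
  destruct (Rlt_or_le (tau n) eps) as [Hlt | Hle]; [exact Hlt|].
  pose proof (pow_incr eps (tau n) rho ltac:(lra)). rewrite tau_pow_rho in * by exact Hn.
  pose proof (pow_lt eps rho Heps). pose proof (Rle_abs (inv_nat n)). lra.
Qed.

Lemma tau_pow_le n a b : (1 <= n)%nat -> (a <= b)%nat -> tau n ^ b <= tau n ^ a.
Proof.
  intros Hn Hab. apply pow_le_pow_of_le_1; [|exact Hab].
  split; [left; apply tau_pos | apply tau_le_1, Hn].
Qed.

Lemma nroot_pow_mul_tau_pow n j a : (j <= a)%nat -> nroot n ^ j * tau n ^ a = tau n ^ (a - j).
Proof.
  intros H. replace a with (j + (a - j))%nat at 1 by lia.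
  rewrite pow_add, <- Rmult_assoc, <- Rpow_mult_distr, nroot_mul_tau, pow1. ring.
Qed.

Definition scaled_second_diff (F : R -> R) (j n : nat) : R :=
  nroot n ^ j * (F (2 * inv_nat n) - 2 * F (inv_nat n) + F 0).

Lemma is_lim_seq_scaled_second_diff F j : taylor_approx F 2 -> (j <= rho)%nat ->
  is_lim_seq (scaled_second_diff F j) 0.
Proof.
  intros HF Hj. unfold scaled_second_diff. destruct (second_diff_bound F HF) as [C HC].
  apply (is_lim_seq_0_le _ (fun n => Rabs C * inv_nat n));
    [|apply is_lim_seq_scal_0, is_lim_seq_inv_nat].
  pose proof (eventually_abs_le_of_lim_0 _ (/4) is_lim_seq_inv_nat ltac:(lra)) as Hx.
  refine (filter_imp _ _ _ (filter_and _ _ Hx (eventually_ge 1))). intros n [Hn H1].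
  assert (Hxpos : 0 < inv_nat n) by (apply Rinv_0_lt_compat, INR_pos, H1).
  assert (Hu : nroot n ^ j <= INR n).
  { rewrite <- (nroot_pow_rho n H1). apply Rle_pow; [apply nroot_ge_1, H1 | exact Hj]. }
  rewrite Rabs_mult, (Rabs_right (nroot n ^ j)) by (left; apply pow_lt, nroot_pos).
  apply Rle_trans with (INR n * (Rabs C * inv_nat n ^ 2)).
  - apply Rmult_le_compat; [left; apply pow_lt, nroot_pos | apply Rabs_pos | exact Hu|].
    eapply Rle_trans; [apply HC, Hn|].
    apply Rmult_le_compat_r; [apply pow2_ge_0 | apply Rle_abs].
  - right. unfold inv_nat. field. apply not_0_INR. lia.
Qed.

Variable M : nat.

Definition small (v : nat -> R) : Prop := is_lim_seq (fun n => nroot n ^ M * v n) 0.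

Definition has_expansion (v : nat -> R) : Prop :=
  exists c, small (fun n => v n - poly_sum c (S M) (tau n)).

Lemma small_ext v w : eventually (fun n => v n = w n) -> small v -> small w.
Proof.
  intros Hvw. apply is_lim_seq_ext_loc.
  apply (filter_imp _ _ (fun n (H : v n = w n) => f_equal _ H) Hvw).
Qed.

Lemma small_add v w : small v -> small w -> small (fun n => v n + w n).
Proof.
  intros Hv Hw. apply (is_lim_seq_ext (fun n => nroot n ^ M * v n + nroot n ^ M * w n));
    [intros; ring|].
  rewrite <- (Rplus_0_l 0). apply is_lim_seq_plus'; assumption.
Qed.

Lemma small_mul_bounded v w B : eventually (fun n => Rabs (w n) <= B) -> small v ->
  small (fun n => w n * v n).
Proof.
  intros Hw Hv. apply (is_lim_seq_0_le _ (fun n => B * Rabs (nroot n ^ M * v n))).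
  - refine (filter_imp _ _ _ Hw); intros n H.
    rewrite (Rmult_comm (w n)), <- Rmult_assoc, Rabs_mult, Rmult_comm.
    apply Rmult_le_compat_r; [apply Rabs_pos | exact H].
  - apply is_lim_seq_scal_0, (proj1 (is_lim_seq_abs_0 _)), Hv.
Qed.

Lemma small_scal a v : small v -> small (fun n => a * v n).
Proof.
  apply (small_mul_bounded _ _ (Rabs a)). exists O. intros; apply Rle_refl.
Qed.

Lemma small_of_bound v C : eventually (fun n => Rabs (v n) <= C * tau n ^ S M) -> small v.
Proof.
  intros Hv. apply (is_lim_seq_0_le _ (fun n => C * tau n)).
  - refine (filter_imp _ _ _ Hv); intros n H.
    rewrite Rabs_mult, (Rabs_right (nroot n ^ M)) by (left; apply pow_lt, nroot_pos).
    replace (C * tau n) with (nroot n ^ M * (C * tau n ^ S M))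
      by (rewrite (Rmult_comm C), <- Rmult_assoc, nroot_pow_mul_tau_pow, Nat.sub_succ_l,
            Nat.sub_diag by lia; ring).
    apply Rmult_le_compat_l; [apply pow_le; left; apply nroot_pos | exact H].
  - apply is_lim_seq_scal_0, is_lim_seq_tau.
Qed.

Lemma small_0 : small (fun _ => 0).
Proof.
  apply (is_lim_seq_ext (fun _ => 0)); [intros; ring | apply is_lim_seq_const].
Qed.

Lemma small_le v : small v -> eventually (fun n => Rabs (v n) <= tau n ^ M).
Proof.
  intros Hv. apply is_lim_seq_spec in Hv.
  refine (filter_imp _ _ _ (Hv (mkposreal 1 Rlt_0_1))); intros n H.
  simpl in H. rewrite Rminus_0_r, Rabs_mult, (Rabs_right (nroot n ^ M)) in H
    by (left; apply pow_lt, nroot_pos).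
  replace (Rabs (v n)) with (tau n ^ M * (nroot n ^ M * Rabs (v n)))
    by (rewrite <- Rmult_assoc, <- Rpow_mult_distr, (Rmult_comm (tau n)), nroot_mul_tau, pow1;
        ring).
  rewrite <- (Rmult_1_r (tau n ^ M)) at 2.
  apply Rmult_le_compat_l; [apply pow_le; left; apply tau_pos | lra].
Qed.

Lemma has_expansion_ext v w : eventually (fun n => v n = w n) ->
  has_expansion v -> has_expansion w.
Proof.
  intros Hvw [c Hc]. exists c. refine (small_ext _ _ (filter_imp _ _ _ Hvw) Hc).
  intros n H. simpl. rewrite H. reflexivity.
Qed.

Lemma has_expansion_small v : small v -> has_expansion v.
Proof.
  intros Hv. exists (fun _ => 0). apply (small_ext v); [|exact Hv].
  exists O. intros n _. rewrite poly_sum_zero. ring.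
Qed.

Lemma has_expansion_add v w : has_expansion v -> has_expansion w ->
  has_expansion (fun n => v n + w n).
Proof.
  intros [c Hc] [d Hd]. exists (fun k => c k + d k).
  apply (small_ext (fun n => (v n - poly_sum c (S M) (tau n)) + (w n - poly_sum d (S M) (tau n)))).
  - exists O. intros n _. rewrite poly_sum_add. ring.
  - apply small_add; assumption.
Qed.

Lemma has_expansion_scal a v : has_expansion v -> has_expansion (fun n => a * v n).
Proof.
  intros [c Hc]. exists (fun k => a * c k).
  apply (small_ext (fun n => a * (v n - poly_sum c (S M) (tau n)))).
  - exists O. intros n _. rewrite poly_sum_scal. ring.
  - apply small_scal, Hc.
Qed.

Lemma has_expansion_const a : has_expansion (fun _ => a).
Proof.
  exists (fun k => match k with O => a | _ => 0 end).
  apply (small_ext (fun _ => 0)).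
  - exists O. intros n _. rewrite poly_sum_split, poly_sum_zero. ring.
  - apply small_0.
Qed.

Lemma has_expansion_tau_mul v : has_expansion v -> has_expansion (fun n => tau n * v n).
Proof.
  intros [c Hc]. exists (fun k => match k with O => 0 | S k => c k end).
  apply (small_ext (fun n => tau n * (v n - poly_sum c (S M) (tau n)) + c M * tau n ^ S M)).
  - exists O. intros n _.
    rewrite (poly_sum_split (fun k => match k with O => 0 | S k => c k end)). simpl.
    change (poly_sum (fun k => c k)) with (poly_sum c). ring.
  - apply small_add.
    + apply (small_mul_bounded _ _ 1); [|exact Hc].
      exists 1%nat. intros n Hn. rewrite Rabs_right by (left; apply tau_pos). apply tau_le_1, Hn.
    + apply (small_of_bound _ (Rabs (c M))). exists O. intros n _.
      rewrite Rabs_mult, (Rabs_right (tau n ^ S M)) by (left; apply pow_lt, tau_pos). lra.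
Qed.

Lemma has_expansion_tau_pow_mul m v : has_expansion v -> has_expansion (fun n => tau n ^ m * v n).
Proof.
  intros Hv. induction m as [|m IH].
  - apply (has_expansion_ext v); [exists O; intros; simpl; ring | exact Hv].
  - apply (has_expansion_ext (fun n => tau n * (tau n ^ m * v n)));
      [exists O; intros; simpl; ring | apply has_expansion_tau_mul, IH].
Qed.

Lemma has_expansion_tau_pow m : has_expansion (fun n => tau n ^ m).
Proof.
  apply (has_expansion_ext (fun n => tau n ^ m * 1));
    [exists O; intros; ring | apply has_expansion_tau_pow_mul, has_expansion_const].
Qed.

Lemma has_expansion_bounded v : has_expansion v -> exists B, eventually (fun n => Rabs (v n) <= B).
Proof.
  intros [c Hc]. exists (1 + poly_sum (fun k => Rabs (c k)) (S M) 1).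
  refine (filter_imp _ _ _ (filter_and _ _ (small_le _ Hc) (eventually_ge 1))).
  intros n [Hn H1]. pose proof (tau_pos n). pose proof (tau_le_1 n H1).
  replace (v n) with ((v n - poly_sum c (S M) (tau n)) + poly_sum c (S M) (tau n)) by ring.
  eapply Rle_trans; [apply Rabs_triang|]. apply Rplus_le_compat.
  - eapply Rle_trans; [exact Hn|]. apply (pow_le_pow_of_le_1 _ 0); [lra | lia].
  - apply poly_sum_abs_le. lra.
Qed.

Lemma has_expansion_mul_poly_sum v d K : has_expansion v ->
  has_expansion (fun n => v n * poly_sum d K (tau n)).
Proof.
  intros Hv. induction K as [|K IH]; simpl.
  - apply (has_expansion_ext (fun _ => 0)); [exists O; intros; ring | apply has_expansion_const].
  - apply (has_expansion_ext (fun n => v n * poly_sum d K (tau n) + d K * (tau n ^ K * v n)));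
      [exists O; intros; ring|].
    apply has_expansion_add; [exact IH | apply has_expansion_scal, has_expansion_tau_pow_mul, Hv].
Qed.

Lemma has_expansion_mul v w : has_expansion v -> has_expansion w ->
  has_expansion (fun n => v n * w n).
Proof.
  intros Hv [d Hd]. destruct (has_expansion_bounded v Hv) as [B HB].
  apply (has_expansion_ext (fun n => v n * poly_sum d (S M) (tau n)
                                     + v n * (w n - poly_sum d (S M) (tau n))));
    [exists O; intros; ring|].
  apply has_expansion_add; [apply has_expansion_mul_poly_sum, Hv|].
  apply has_expansion_small, (small_mul_bounded _ _ B HB Hd).
Qed.

Lemma has_expansion_pow v m : has_expansion v -> has_expansion (fun n => v n ^ m).
Proof.
  intros Hv. induction m as [|m IH]; simpl; [apply has_expansion_const|].
  apply (has_expansion_mul _ _ Hv IH).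
Qed.

Lemma has_expansion_poly_sum c K w : has_expansion w ->
  has_expansion (fun n => poly_sum c K (w n)).
Proof.
  intros Hw. induction K as [|K IH]; simpl; [apply has_expansion_const|].
  apply has_expansion_add; [exact IH | apply has_expansion_scal, has_expansion_pow, Hw].
Qed.

Lemma has_expansion_sum (F : nat -> nat -> R) a b :
  (forall i, (a <= i <= b)%nat -> has_expansion (F i)) ->
  has_expansion (fun n => sum_n_m (fun i => F i n) a b).
Proof.
  apply sum_n_m_closed; [apply has_expansion_const | apply has_expansion_add].
Qed.

Lemma is_lim_seq_of_small v : small v -> is_lim_seq v 0.
Proof.
  intros Hv. apply (is_lim_seq_0_le _ (fun n => Rabs (nroot n ^ M * v n)));
    [|apply (proj1 (is_lim_seq_abs_0 _)), Hv].
  refine (filter_imp _ _ _ (eventually_ge 1)). intros n Hn.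
  rewrite Rabs_mult, (Rabs_right (nroot n ^ M)) by (left; apply pow_lt, nroot_pos).
  rewrite <- (Rmult_1_l (Rabs (v n))) at 1. apply Rmult_le_compat_r; [apply Rabs_pos|].
  rewrite <- (pow1 M). apply pow_incr. split; [lra | apply nroot_ge_1, Hn].
Qed.

Lemma is_lim_seq_of_small_expansion v c : small (fun n => v n - poly_sum c (S M) (tau n)) ->
  is_lim_seq v (c O).
Proof.
  intros Hc. apply is_lim_seq_of_sub_0.
  apply (is_lim_seq_ext
           (fun n => (v n - poly_sum c (S M) (tau n)) + (poly_sum c (S M) (tau n) - c O)));
    [intros; ring|].
  rewrite <- (Rplus_0_l 0). apply is_lim_seq_plus'.
  - apply is_lim_seq_of_small, Hc.
  - apply (is_lim_seq_0_le _ (fun n => tau n * poly_sum (fun k => Rabs (c (S k))) M 1)).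
    + refine (filter_imp _ _ _ (eventually_ge 1)). intros n Hn.
      apply poly_sum_sub_coef0_le. split; [left; apply tau_pos | apply tau_le_1, Hn].
    + apply (is_lim_seq_ext (fun n => poly_sum (fun k => Rabs (c (S k))) M 1 * tau n));
        [intros; ring | apply is_lim_seq_scal_0, is_lim_seq_tau].
Qed.

Lemma expansion_coef0_eq_lim v c (L : R) : small (fun n => v n - poly_sum c (S M) (tau n)) ->
  is_lim_seq v L -> c O = L.
Proof.
  intros Hc HvL. apply is_lim_seq_unique in HvL.
  rewrite (is_lim_seq_unique _ _ (is_lim_seq_of_small_expansion v c Hc)) in HvL.
  injection HvL. auto.
Qed.

Lemma small_iff_Rpower v :
  small v <-> is_lim_seq (fun n => Rpower (INR n) (INR M / INR rho) * v n) 0.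
Proof.
  assert (E : eventually (fun n => nroot n ^ M * v n = Rpower (INR n) (INR M / INR rho) * v n)).
  { refine (filter_imp _ _ _ (eventually_ge 1)). intros n Hn.
    rewrite Rpower_INR_frac by exact Hn. reflexivity. }
  split; intros H; refine (is_lim_seq_ext_loc _ _ _ _ H); [exact E|].
  refine (filter_imp _ _ _ E). intros n En. symmetry. exact En.
Qed.

Lemma small_shift v k : small v -> small (fun n => v (n + k)%nat).
Proof.
  intros Hv. apply (is_lim_seq_incr_n _ k) in Hv.
  apply (is_lim_seq_0_le _ (fun n => Rabs (nroot (n + k)%nat ^ M * v (n + k)%nat)));
    [|apply (proj1 (is_lim_seq_abs_0 _)), Hv].
  refine (filter_imp _ _ _ (eventually_ge 1)). intros n Hn.
  rewrite !Rabs_mult. apply Rmult_le_compat_r; [apply Rabs_pos|].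
  rewrite !Rabs_right by (left; apply pow_lt, nroot_pos).
  apply pow_incr. split; [left; apply nroot_pos | apply nroot_le_mono; lia].
Qed.

Lemma has_expansion_nroot_pow_mul_inv_nat_pow j i k : (j <= rho * i)%nat ->
  has_expansion (fun n => nroot n ^ j * (k * inv_nat n) ^ i).
Proof.
  intros Hji. apply (has_expansion_ext (fun n => k ^ i * tau n ^ (rho * i - j))).
  - refine (filter_imp _ _ _ (eventually_ge 1)). intros n Hn.
    rewrite <- (tau_pow_rho n Hn), Rpow_mult_distr, <- pow_mult,
      <- (nroot_pow_mul_tau_pow n j) by exact Hji.
    ring.
  - apply has_expansion_scal, has_expansion_tau_pow.
Qed.

Lemma small_nroot_pow_comp G C K j k :
  (forall y, Rabs y <= /2 -> Rabs (G y) <= C * Rabs y ^ K) -> (j + S M <= rho * K)%nat ->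
  small (fun n => nroot n ^ j * G (k * inv_nat n)).
Proof.
  intros HG HK. apply (small_of_bound _ (Rabs C * Rabs k ^ K)).
  pose proof (eventually_abs_le_of_lim_0 _ (/2) (is_lim_seq_inv_nat_scal k) ltac:(lra)) as Hkx.
  refine (filter_imp _ _ _ (filter_and _ _ Hkx (eventually_ge 1))). intros n [Hn H1].
  rewrite Rabs_mult, (Rabs_right (nroot n ^ j)) by (left; apply pow_lt, nroot_pos).
  eapply Rle_trans.
  { apply Rmult_le_compat_l; [left; apply pow_lt, nroot_pos|].
    eapply Rle_trans; [apply HG, Hn|].
    apply Rmult_le_compat_r; [apply pow_le, Rabs_pos | apply Rle_abs]. }
  rewrite Rabs_mult, (Rabs_right (inv_nat n)) by (left; apply Rinv_0_lt_compat, INR_pos, H1).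
  rewrite <- (tau_pow_rho n H1), Rpow_mult_distr, <- pow_mult.
  replace (nroot n ^ j * (Rabs C * (Rabs k ^ K * tau n ^ (rho * K))))
    with (Rabs C * Rabs k ^ K * (nroot n ^ j * tau n ^ (rho * K))) by ring.
  rewrite nroot_pow_mul_tau_pow by lia.
  apply Rmult_le_compat_l; [apply Rmult_le_pos; [apply Rabs_pos | apply pow_le, Rabs_pos]|].
  apply tau_pow_le; lia.
Qed.

(* Order [M + 2]: the factor [n^(j/rho)], [j <= rho], costs one power of [1/n]. *)
Lemma has_expansion_nroot_pow_comp F j k : taylor_approx F (S (S M)) -> (j <= rho)%nat ->
  has_expansion (fun n => nroot n ^ j * (F (k * inv_nat n) - F 0)).
Proof.
  intros [c [C HF]] Hj.
  pose proof (taylor_approx_coef0 F c C (S (S M)) ltac:(lia) HF) as Hc0.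
  assert (Hpoly : forall K,
    has_expansion (fun n => nroot n ^ j * (poly_sum c (S K) (k * inv_nat n) - c O))).
  { induction K as [|K IH].
    - apply (has_expansion_ext (fun _ => 0)); [exists O; intros; simpl; ring|].
      apply has_expansion_const.
    - apply (has_expansion_ext (fun n => nroot n ^ j * (poly_sum c (S K) (k * inv_nat n) - c O)
                                  + c (S K) * (nroot n ^ j * (k * inv_nat n) ^ S K)));
        [exists O; intros; simpl; ring|].
      apply has_expansion_add; [exact IH|].
      apply has_expansion_scal, has_expansion_nroot_pow_mul_inv_nat_pow. nia. }
  apply (has_expansion_ext (fun n => nroot n ^ j * (poly_sum c (S (S M)) (k * inv_nat n) - c O)
      + nroot n ^ j * (F (k * inv_nat n) - poly_sum c (S (S M)) (k * inv_nat n))));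
    [exists O; intros; rewrite Hc0; ring|].
  apply has_expansion_add; [apply Hpoly|].
  apply has_expansion_small, (small_nroot_pow_comp _ C (S (S M)) j k HF). nia.
Qed.

Lemma has_expansion_scaled_second_diff F j : taylor_approx F (S (S M)) -> (j <= rho)%nat ->
  has_expansion (scaled_second_diff F j).
Proof.
  intros HF Hj.
  apply (has_expansion_ext (fun n => nroot n ^ j * (F (2 * inv_nat n) - F 0)
                                     + -2 * (nroot n ^ j * (F (1 * inv_nat n) - F 0)))).
  - exists O. intros n _. unfold scaled_second_diff. rewrite Rmult_1_l. ring.
  - apply has_expansion_add; [|apply has_expansion_scal];
      apply has_expansion_nroot_pow_comp; assumption.
Qed.

Hypothesis HM : (0 < M)%nat.

(* Fails for [M = 0]: an [o(1)] remainder does not give [O(tau)]. *)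
Lemma has_expansion_O_tau v : has_expansion v -> is_lim_seq v 0 ->
  exists C, eventually (fun n => Rabs (v n) <= C * tau n).
Proof.
  intros [c Hc] Hv.
  pose proof (expansion_coef0_eq_lim v c 0 Hc Hv) as Hc0.
  exists (1 + poly_sum (fun k => Rabs (c (S k))) M 1).
  refine (filter_imp _ _ _ (filter_and _ _ (small_le _ Hc) (eventually_ge 1))).
  intros n [Hn H1]. pose proof (tau_pos n). pose proof (tau_le_1 n H1).
  replace (v n) with ((v n - poly_sum c (S M) (tau n)) + (poly_sum c (S M) (tau n) - c O))
    by (rewrite Hc0; ring).
  eapply Rle_trans; [apply Rabs_triang|]. rewrite Rmult_plus_distr_r. apply Rplus_le_compat.
  - eapply Rle_trans; [exact Hn|]. rewrite Rmult_1_l. rewrite <- (pow_1 (tau n)) at 2.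
    apply tau_pow_le; lia.
  - rewrite Rmult_comm. apply poly_sum_sub_coef0_le. lra.
Qed.

Lemma has_expansion_comp F w : taylor_approx F (S M) -> has_expansion w -> is_lim_seq w 0 ->
  has_expansion (fun n => F (w n)).
Proof.
  intros [c [C HF]] Hw Hw0.
  destruct (has_expansion_O_tau w Hw Hw0) as [Cw HCw].
  apply (has_expansion_ext (fun n => poly_sum c (S M) (w n) + (F (w n) - poly_sum c (S M) (w n))));
    [exists O; intros; ring|].
  apply has_expansion_add; [apply has_expansion_poly_sum, Hw|].
  apply has_expansion_small, (small_of_bound _ (Rabs C * Cw ^ S M)).
  pose proof (eventually_abs_le_of_lim_0 w (/2) Hw0 ltac:(lra)) as Hw2.
  refine (filter_imp _ _ _ (filter_and _ _ HCw Hw2)).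
  intros n [H1 H2]. eapply Rle_trans; [apply HF, H2|].
  rewrite Rmult_assoc, <- Rpow_mult_distr.
  eapply Rle_trans; [apply Rmult_le_compat_r; [apply pow_le, Rabs_pos | apply Rle_abs]|].
  apply Rmult_le_compat_l; [apply Rabs_pos|].
  apply pow_incr. split; [apply Rabs_pos | exact H1].
Qed.

Lemma has_expansion_inv v (L : R) : has_expansion v -> is_lim_seq v L -> L <> 0 ->
  has_expansion (fun n => / v n).
Proof.
  intros Hv HvL HL.
  set (w := fun n => / L * v n - 1).
  assert (Hw0 : is_lim_seq w 0).
  { apply (is_lim_seq_ext (fun n => / L * (v n - L))); [intros n; unfold w; field; exact HL|].
    apply is_lim_seq_scal_0. apply (is_lim_seq_ext (fun n => v n + - L)); [intros; ring|].
    replace (Finite 0) with (Finite (L + - L)) by (f_equal; ring).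
    apply is_lim_seq_plus'; [exact HvL | apply is_lim_seq_const]. }
  assert (Hw : has_expansion w).
  { apply has_expansion_add; [apply has_expansion_scal, Hv | apply has_expansion_const]. }
  apply (has_expansion_ext (fun n => / L * pow1p (-1) (w n))).
  - refine (filter_imp _ _ _ (eventually_abs_le_of_lim_0 w (/2) Hw0 _)); [|lra].
    intros n Hn%Rabs_le_between. rewrite pow1p_m1 by lra. unfold w in *.
    assert (v n <> 0).
    { intros E. rewrite E, Rmult_0_r in Hn. lra. }
    replace (1 + (/ L * v n - 1)) with (v n / L) by (field; exact HL).
    field. auto.
  - apply has_expansion_scal, has_expansion_comp;
      [apply taylor_approx_pow1p | exact Hw | exact Hw0].
Qed.

Lemma has_expansion_inv_nat_scal k : has_expansion (fun n => k * inv_nat n).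
Proof.
  apply (has_expansion_ext (fun n => k * tau n ^ rho)).
  - refine (filter_imp _ _ _ (eventually_ge 1)). intros n Hn. rewrite tau_pow_rho by exact Hn.
    reflexivity.
  - apply has_expansion_scal, has_expansion_tau_pow.
Qed.

Lemma has_expansion_limit_coefs v (L : R) : has_expansion v -> is_lim_seq v L ->
  exists c, is_lim_seq (fun n => Rpower (INR n) (INR M / INR rho) *
     (v n - L - sum_n_m (fun i => c i / Rpower (INR n) (INR i / INR rho)) 1 M)) 0.
Proof.
  intros [c Hc] HvL.
  pose proof (expansion_coef0_eq_lim v c L Hc HvL) as Hc0.
  exists c. apply small_iff_Rpower. refine (small_ext _ _ _ Hc).
  refine (filter_imp _ _ _ (eventually_ge 1)). intros n Hn.
  rewrite poly_sum_sum_n_m, Hc0, Rminus_plus_distr. f_equal. apply sum_n_m_ext. intros i.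
  rewrite Rpower_INR_frac by exact Hn. unfold tau. rewrite pow_inv. reflexivity.
Qed.

End Scale.

(** * The ratio [a_n a_(n+2) / a_(n+1)^2] *)

Lemma INR_add_eq_mul_inv_nat n k : (1 <= n)%nat ->
  INR (n + k) = INR n * (1 + INR k * inv_nat n).
Proof.
  intros Hn. unfold inv_nat. rewrite plus_INR. field. apply not_0_INR. lia.
Qed.

Lemma INR_mul_inv_nat_nonneg k n : (1 <= n)%nat -> 0 <= INR k * inv_nat n.
Proof.
  intros Hn. apply Rmult_le_pos; [apply pos_INR | left; apply Rinv_0_lt_compat, INR_pos, Hn].
Qed.

Lemma Rpower_shift n k a : (1 <= n)%nat ->
  Rpower (INR (n + k)) a = Rpower (INR n) a * pow1p a (INR k * inv_nat n).
Proof.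
  intros Hn. pose proof (INR_pos n Hn). pose proof (INR_mul_inv_nat_nonneg k n Hn).
  unfold Rpower, pow1p.
  rewrite <- exp_plus, INR_add_eq_mul_inv_nat, ln_mult by (auto; lra). f_equal. ring.
Qed.

Lemma xlog_shift n k : (1 <= n)%nat ->
  INR (n + k) * ln (INR (n + k)) = INR (n + k) * ln (INR n) + INR n * xlog1p (INR k * inv_nat n).
Proof.
  intros Hn. pose proof (INR_pos n Hn). pose proof (INR_mul_inv_nat_nonneg k n Hn).
  unfold xlog1p. rewrite INR_add_eq_mul_inv_nat at 2 by exact Hn. rewrite ln_mult by lra.
  rewrite (INR_add_eq_mul_inv_nat n k Hn). ring.
Qed.

Lemma Rpower_second_diff n a : (1 <= n)%nat ->
  Rpower (INR n) a + Rpower (INR (n + 2)) a - 2 * Rpower (INR (n + 1)) a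
  = Rpower (INR n) a * (pow1p a (2 * inv_nat n) - 2 * pow1p a (inv_nat n) + pow1p a 0).
Proof.
  intros Hn. rewrite !Rpower_shift, pow1p_0 by exact Hn.
  change (INR 1) with 1. rewrite Rmult_1_l. replace (INR 2) with 2 by (simpl; ring). ring.
Qed.

Lemma xlog_second_diff n : (1 <= n)%nat ->
  INR n * ln (INR n) + INR (n + 2) * ln (INR (n + 2)) - 2 * (INR (n + 1) * ln (INR (n + 1)))
  = INR n * (xlog1p (2 * inv_nat n) - 2 * xlog1p (inv_nat n) + xlog1p 0).
Proof.
  intros Hn. rewrite !xlog_shift, xlog1p_0 by exact Hn. rewrite !plus_INR.
  change (INR 1) with 1. rewrite Rmult_1_l. replace (INR 2) with 2 by (simpl; ring). ring.
Qed.

Lemma sum_n_m_add_sub_double (f g h : nat -> R) a b :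
  sum_n_m (fun i => f i + g i - 2 * h i) a b = sum_n_m f a b + sum_n_m g a b - 2 * sum_n_m h a b.
Proof.
  transitivity (sum_n_m (fun i => plus (plus (f i) (g i)) (mult (-2) (h i))) a b).
  { apply sum_n_m_ext. intros i. unfold plus, mult. simpl. ring. }
  rewrite !sum_n_m_plus, (sum_n_m_mult_l (K := R_Ring)).
  change (sum_n_m f a b + sum_n_m g a b + -2 * sum_n_m h a b
          = sum_n_m f a b + sum_n_m g a b - 2 * sum_n_m h a b). ring.
Qed.

Definition Q_second_diff (rho : nat) (mu : nat -> R) (n : nat) : R :=
  mu 0%nat * scaled_second_diff rho xlog1p rho n
  + sum_n_m (fun j => mu j * scaled_second_diff rho (pow1p (INR j / INR rho)) j n) 1 rho.

Lemma Qexp_second_diff rho mu n : (0 < rho)%nat -> (1 <= n)%nat ->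
  Qexp rho mu n + Qexp rho mu (n + 2) - 2 * Qexp rho mu (n + 1) = Q_second_diff rho mu n.
Proof.
  intros Hrho Hn. unfold Qexp, Q_second_diff.
  rewrite (sum_n_m_ext (fun j => mu j * scaled_second_diff rho (pow1p (INR j / INR rho)) j n)
    (fun j => mu j * Rpower (INR n) (INR j / INR rho)
      + mu j * Rpower (INR (n + 2)) (INR j / INR rho)
      - 2 * (mu j * Rpower (INR (n + 1)) (INR j / INR rho)))).
  2: { intros j. unfold scaled_second_diff.
       rewrite <- Rpower_INR_frac, <- Rpower_second_diff by assumption.
       match goal with |- ?l = ?r => change (@eq R l r) end. ring. }
  unfold scaled_second_diff.
  rewrite sum_n_m_add_sub_double, (nroot_pow_rho rho Hrho n Hn), <- xlog_second_diff by exact Hn. ring.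
Qed.

Lemma exp_second_diff p q s : exp (p + q - 2 * s) = exp p * exp q / exp s ^ 2.
Proof.
  replace (p + q - 2 * s) with (p + q + - (s + s)) by ring.
  rewrite !exp_plus, exp_Ropp, exp_plus. pose proof (exp_pos s). field. lra.
Qed.

Section Ratio.

Variables (rho M : nat) (mu : nat -> R) (r : R) (b e : nat -> R).
Hypothesis Hrho : (0 < rho)%nat.

Lemma is_lim_seq_Q_second_diff : is_lim_seq (Q_second_diff rho mu) 0.
Proof.
  unfold Q_second_diff. rewrite <- (Rplus_0_l 0).
  apply is_lim_seq_plus'.
  - apply is_lim_seq_scal_0, is_lim_seq_scaled_second_diff;
      [exact Hrho | apply (taylor_approx_xlog1p 0) | lia].
  - apply (sum_n_m_closed (fun v => is_lim_seq v 0)).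
    + apply is_lim_seq_const.
    + intros f g Hf Hg. rewrite <- (Rplus_0_l 0). apply is_lim_seq_plus'; assumption.
    + intros j Hj. apply is_lim_seq_scal_0, is_lim_seq_scaled_second_diff;
        [exact Hrho | apply taylor_approx_pow1p | lia].
Qed.

Definition profile (k n : nat) : R :=
  pow1p r (INR k * inv_nat n) *
  (sum_n_m (fun s => b s * (tau rho n ^ s * pow1p (- (INR s / INR rho)) (INR k * inv_nat n))) 0 M
   + e (n + k)%nat).

Variable a : nat -> R.
Hypothesis Ha : forall n : nat, (1 <= n)%nat ->
  a n = exp (Qexp rho mu n) * Rpower (INR n) r *
        (sum_n_m (fun s => b s * Rpower (INR n) (- (INR s / INR rho))) 0 M + e n).

Lemma a_shift_eq_profile k n : (1 <= n)%nat ->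
  a (n + k)%nat = exp (Qexp rho mu (n + k)) * Rpower (INR n) r * profile k n.
Proof.
  intros Hn. rewrite Ha by lia. unfold profile.
  rewrite (sum_n_m_ext _
    (fun s => b s * (tau rho n ^ s * pow1p (- (INR s / INR rho)) (INR k * inv_nat n)))).
  - rewrite Rpower_shift by exact Hn. ring.
  - intros s. rewrite Rpower_shift, Rpower_Ropp, (Rpower_INR_frac rho n) by exact Hn.
    unfold tau. rewrite pow_inv. reflexivity.
Qed.

Hypothesis He : small rho M e.

Lemma is_lim_seq_profile k : is_lim_seq (profile k) (b 0%nat).
Proof.
  assert (Hpow : forall p, is_lim_seq (fun n => pow1p p (INR k * inv_nat n)) 1).
  { intros p. rewrite <- (pow1p_0 p).
    apply is_lim_seq_taylor_comp; [apply taylor_approx_pow1p | apply is_lim_seq_inv_nat_scal]. }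
  unfold profile. replace (b 0%nat) with (1 * ((b 0%nat + 0) + 0)) by ring.
  apply is_lim_seq_mult'; [apply Hpow|]. apply is_lim_seq_plus'.
  2: { apply (is_lim_seq_of_small rho Hrho M), (small_shift rho Hrho), He. }
  apply (is_lim_seq_ext (fun n => b 0%nat + sum_n_m
           (fun s => b s * (tau rho n ^ s * pow1p (- (INR s / INR rho)) (INR k * inv_nat n))) 1 M)).
  { intros n. rewrite (sum_Sn_m _ 0 M) by lia. change (plus ?a ?c) with (a + c).
    replace (- (INR 0 / INR rho)) with 0 by (simpl; unfold Rdiv; ring).
    rewrite pow1p_0_l. simpl. ring. }
  apply is_lim_seq_plus'; [apply is_lim_seq_const|].
  apply (sum_n_m_closed (fun v => is_lim_seq v 0)).
  - apply is_lim_seq_const.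
  - intros f g Hf Hg. rewrite <- (Rplus_0_l 0). apply is_lim_seq_plus'; assumption.
  - intros s Hs. apply is_lim_seq_scal_0. rewrite <- (Rmult_0_l 1).
    apply is_lim_seq_mult'; [|apply Hpow].
    apply (is_lim_seq_0_le _ (tau rho)); [|apply (is_lim_seq_tau rho Hrho)].
    refine (filter_imp _ _ _ (eventually_ge 1)). intros n Hn.
    rewrite Rabs_right by (left; apply pow_lt, tau_pos).
    rewrite <- (pow_1 (tau rho n)) at 2. apply (tau_pow_le rho Hrho); lia.
Qed.

Definition ratio_model (n : nat) : R :=
  exp (Q_second_diff rho mu n) * (profile 0 n * profile 2 n) * / (profile 1 n * profile 1 n).

Hypothesis Hb0 : b 0%nat <> 0.

Lemma ratio_model_eq :
  eventually (fun n => ratio_model n = a n * a (n + 2)%nat / a (n + 1)%nat ^ 2).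
Proof.
  pose proof (eventually_neq_0_of_lim _ _ (is_lim_seq_profile 1) Hb0) as Hp1.
  refine (filter_imp _ _ _ (filter_and _ _ Hp1 (eventually_ge 1))). intros n [Hp Hn].
  unfold ratio_model.
  replace (a n) with (a (n + 0)%nat) by (rewrite Nat.add_0_r; reflexivity).
  rewrite !a_shift_eq_profile, <- Qexp_second_diff, exp_second_diff, Nat.add_0_r by assumption.
  pose proof (exp_pos (Qexp rho mu (n + 1))). pose proof (exp_pos (r * ln (INR n))).
  unfold Rpower. field. repeat split; lra || assumption.
Qed.

Lemma is_lim_seq_ratio_model : is_lim_seq ratio_model 1.
Proof.
  assert (Hb2 : b 0%nat * b 0%nat <> 0) by (apply Rmult_integral_contrapositive; auto).
  unfold ratio_model.
  replace (Finite 1) with (Finite (exp 0 * (b 0%nat * b 0%nat) * / (b 0%nat * b 0%nat)))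
    by (rewrite exp_0; f_equal; field; exact Hb0).
  apply is_lim_seq_mult'; [apply is_lim_seq_mult'|].
  - apply is_lim_seq_taylor_comp; [apply taylor_approx_exp | apply is_lim_seq_Q_second_diff].
  - apply is_lim_seq_mult'; apply is_lim_seq_profile.
  - apply (is_lim_seq_inv _ (b 0%nat * b 0%nat)); [|intros E; injection E; exact Hb2].
    apply is_lim_seq_mult'; apply is_lim_seq_profile.
Qed.

Hypothesis HM : (0 < M)%nat.

Lemma has_expansion_Q_second_diff : has_expansion rho M (Q_second_diff rho mu).
Proof.
  apply has_expansion_add.
  - apply has_expansion_scal, has_expansion_scaled_second_diff;
      [exact Hrho | apply taylor_approx_xlog1p | lia].
  - apply has_expansion_sum. intros j Hj.
    apply has_expansion_scal, has_expansion_scaled_second_diff;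
      [exact Hrho | apply taylor_approx_pow1p | lia].
Qed.

Lemma has_expansion_profile k : has_expansion rho M (profile k).
Proof.
  assert (Hpow : forall p, has_expansion rho M (fun n => pow1p p (INR k * inv_nat n))).
  { intros p. apply (has_expansion_comp rho Hrho M HM); [apply taylor_approx_pow1p | |
      apply is_lim_seq_inv_nat_scal].
    apply (has_expansion_inv_nat_scal rho Hrho). }
  apply (has_expansion_mul rho Hrho); [apply Hpow|].
  apply has_expansion_add.
  - apply has_expansion_sum. intros s _.
    apply has_expansion_scal, (has_expansion_mul rho Hrho);
      [apply (has_expansion_tau_pow rho Hrho) | apply Hpow].
  - apply has_expansion_small, (small_shift rho Hrho), He.
Qed.

Lemma has_expansion_ratio_model : has_expansion rho M ratio_model.
Proof.
  assert (Hb2 : b 0%nat * b 0%nat <> 0) by (apply Rmult_integral_contrapositive; auto).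
  unfold ratio_model. apply (has_expansion_mul rho Hrho); [apply (has_expansion_mul rho Hrho)|].
  - apply (has_expansion_comp rho Hrho M HM); [apply taylor_approx_exp | |].
    + apply has_expansion_Q_second_diff.
    + apply is_lim_seq_Q_second_diff.
  - apply (has_expansion_mul rho Hrho); apply has_expansion_profile.
  - apply (has_expansion_inv rho Hrho M HM _ (b 0%nat * b 0%nat)); [| |exact Hb2].
    + apply (has_expansion_mul rho Hrho); apply has_expansion_profile.
    + apply is_lim_seq_mult'; apply is_lim_seq_profile.
Qed.

End Ratio.

Theorem mainTheorem3
  (a : nat -> R) (rho M : nat) (mu : nat -> R) (r : R) (b : nat -> R)
  (Hrho : (0 < rho)%nat) (HM : (0 < M)%nat)
  (Hrec : P_recursive a)
  (Hb0 : b 0%nat <> 0)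
  (Hasym : exists e : nat -> R,
      is_lim_seq (fun n => Rpower (INR n) (INR M / INR rho) * e n) 0 /\
      forall n : nat, (1 <= n)%nat ->
        a n = exp (Qexp rho mu n) * Rpower (INR n) r *
              (sum_n_m (fun s => b s * Rpower (INR n) (- (INR s / INR rho))) 0 M
               + e n)) :
  exists c : nat -> R,
    is_lim_seq
      (fun n => Rpower (INR n) (INR M / INR rho) *
         (a n * a (n + 2)%nat / (a (n + 1)%nat) ^ 2 - 1
          - sum_n_m (fun i => c i / Rpower (INR n) (INR i / INR rho)) 1 M))
      0.
Proof.
  destruct Hasym as [e [He Ha]].
  apply (small_iff_Rpower rho M e) in He.
  pose proof (ratio_model_eq rho M mu r b e Hrho a Ha He Hb0) as Hratio.
  apply (has_expansion_limit_coefs rho Hrho M).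
  - apply (has_expansion_ext rho M _ _ Hratio). apply has_expansion_ratio_model; assumption.
  - apply (is_lim_seq_ext_loc _ _ _ Hratio). apply is_lim_seq_ratio_model; assumption.
Qed.
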